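(* Let $m$ be a positive integer and let $\mathcal Z$ be a three-class symmetric association scheme with adjacency matrices $A_0=I,A_1,A_2,A_3$ whose character table is $$P=\begin{bmatrix}1&m(m-1)&m(m+1)&(m-1)(m+1)\\1&m&0&-m-1\\1&0&-m&m-1\\1&-m&m&-1\end{bmatrix}.$$ Then $A_1$, $A_2$ and $A_3+A_0$ are incidence matrices of symmetric partial geometric designs with parameters $(v,k;\alpha,\beta)$ respectively $$\big(3m^2,\ m(m-1);\ \tfrac13m^2(m^2-3m+2),\ \tfrac13m^2(m^2-3m+5)\big),$$ $$\big(3m^2,\ m(m+1);\ \tfrac13m^2(m^2+3m+2),\ \tfrac13m^2(m^2+3m+5)\big),$$ $$\big(3m^2,\ m^2;\ \tfrac13m^2(m^2-1),\ \tfrac13m^2(m^2+2)\big).$$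
   Context: A three-class symmetric association scheme has symmetric $0/1$ adjacency matrices $A_0=I,A_1,A_2,A_3$ summing to the all-ones matrix $J$ with $A_iA_j=\sum_hp_{ij}^hA_h$. Its character table is the matrix $P$ with $P_{ij}=p_j(i)$, where $A_j=\sum_i p_j(i)E_i$ and $E_0=\frac1{|X|}J,E_1,E_2,E_3$ are the primitive idempotents of the Bose–Mesner algebra. A symmetric partial geometric design with parameters $(v,k;\alpha,\beta)$ is a design with $v$ points and $v$ blocks, each block of size $k$, each point in $k$ blocks, whose incidence matrix $N$ satisfies $NN^TN=\beta N+\alpha(J-N)$. *)

From HB Require Import structures.
From mathcomp Require Import all_boot all_order all_algebra all_field.
Set Implicit Arguments. Unset Strict Implicit. Unset Printing Implicit Defensive.
Import Order.TTheory GRing.Theory Num.Theory.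
Local Open Scope ring_scope.

Definition Jmx (n : nat) : 'M[algC]_n := const_mx 1.

Definition zero_one_mx (n : nat) (M : 'M[algC]_n) : Prop :=
  forall i j, M i j = 0 \/ M i j = 1.

Definition sym_assoc_scheme (n d : nat) (A : 'I_d.+1 -> 'M[algC]_n) : Prop :=
  [/\ A ord0 = 1%:M,
      forall i, zero_one_mx (A i),
      forall i, A i != 0,
      forall i, (A i)^T = A i
    & \sum_i A i = Jmx n] /\
  (forall i j, exists p : 'I_d.+1 -> nat,
        A i *m A j = \sum_h (p h)%:R *: A h).

Definition character_table (n d : nat) (A : 'I_d.+1 -> 'M[algC]_n)
    (P : 'M[algC]_d.+1) : Prop :=
  exists E : 'I_d.+1 -> 'M[algC]_n,
  [/\ E ord0 = (n%:R)^-1 *: Jmx n,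
      forall i j, E i *m E j = if i == j then E i else 0,
      forall i, E i != 0,
      \sum_i E i = 1%:M
    & forall i, exists c : 'I_d.+1 -> algC, E i = \sum_j c j *: A j] /\
  (forall j, A j = \sum_i P i j *: E i).

Definition sym_partial_geometric_design (n : nat) (N : 'M[algC]_n)
    (v k : nat) (alpha beta : algC) : Prop :=
  [/\ n = v,
      zero_one_mx N,
      forall i, \sum_j N i j = k%:R,
      forall j, \sum_i N i j = k%:R
    & N *m N^T *m N = beta *: N + alpha *: (Jmx n - N)].

Definition P_m (m : nat) : 'M[algC]_4 :=
  let M : algC := m%:R in
  \matrix_(i < 4, j < 4) (nth [::]
    [:: [:: 1; M * (M - 1); M * (M + 1); (M - 1) * (M + 1)];
        [:: 1; M; 0; - M - 1];
        [:: 1; 0; - M; M - 1];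
        [:: 1; - M; M; -1]] i)`_j.

From HB Require Import structures.
From mathcomp Require Import all_boot all_order all_algebra all_field.
From mathcomp Require Import ring.
Set Implicit Arguments. Unset Strict Implicit. Unset Printing Implicit Defensive.
Import Order.TTheory GRing.Theory Num.Theory.
Local Open Scope ring_scope.

(* An element N = \sum_i theta_i E_i of the Bose-Mesner algebra is determined by
   its eigenvalues theta_i, and J = n E_0.  For symmetric N we have
   N N^T N = N^3, so the design equation amounts to
   theta_i^3 = beta theta_i + alpha (n [i = 0] - theta_i) for every i, while the
   row sums of N are theta_0.  Since J = \sum_j A_j, the order n is the first
   row sum of P, here 3 m^2.  The three matrices of the theorem have as
   eigenvalues the columns 1, 2 and 3 + 0 of P, for which these equations are
   polynomial identities in m. *)

Definition pgd_eigenvalues (d v k : nat) (alpha beta : algC)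
    (theta : 'I_d.+1 -> algC) : Prop :=
  theta ord0 = k%:R /\
  forall i, theta i ^+ 3 = beta * theta i + alpha * ((i == ord0)%:R * v%:R - theta i).

Section Spectral.
Variables (n d : nat) (E : 'I_d.+1 -> 'M[algC]_n).

Definition spectral (c : 'I_d.+1 -> algC) : 'M[algC]_n := \sum_i c i *: E i.

Lemma eq_spectral c c' : c =1 c' -> spectral c = spectral c'.
Proof. by move=> eq_c; apply: eq_bigr => i _; rewrite eq_c. Qed.

Lemma spectralD c c' : spectral c + spectral c' = spectral (fun i => c i + c' i).
Proof. by rewrite -big_split; apply: eq_bigr => i _; rewrite scalerDl. Qed.

Lemma spectralB c c' : spectral c - spectral c' = spectral (fun i => c i - c' i).
Proof. by rewrite -sumrB; apply: eq_bigr => i _; rewrite scalerBl. Qed.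

Lemma spectralZ a c : a *: spectral c = spectral (fun i => a * c i).
Proof. by rewrite scaler_sumr; apply: eq_bigr => i _; rewrite scalerA. Qed.

Lemma spectral_sum (I : finType) (F : I -> 'I_d.+1 -> algC) :
  \sum_j spectral (F j) = spectral (fun i => \sum_j F j i).
Proof.
rewrite exchange_big; apply: eq_bigr => i _.
by rewrite scaler_suml.
Qed.

Lemma spectral_delta k : spectral (fun i => (i == k)%:R) = E k.
Proof.
rewrite /spectral (bigD1 k) //= eqxx scale1r big1 ?addr0 // => i /negbTE ->.
by rewrite scale0r.
Qed.

Hypothesis Eorth : forall i j, E i *m E j = if i == j then E i else 0.

Lemma mul_spectral c c' :
  spectral c *m spectral c' = spectral (fun i => c i * c' i).
Proof.
rewrite /spectral mulmx_suml; apply: eq_bigr => i _.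
rewrite mulmx_sumr (bigD1 i) //= big1 => [|j ji].
  by rewrite -scalemxAl -scalemxAr Eorth eqxx scalerA addr0.
by rewrite -scalemxAl -scalemxAr Eorth eq_sym (negbTE ji) !scaler0.
Qed.

Lemma mulE_spectral k c : E k *m spectral c = c k *: E k.
Proof.
rewrite -spectral_delta mul_spectral spectralZ.
by apply: eq_spectral => i; case: eqP => [->|_]; rewrite ?mul1r ?mulr1 ?mul0r ?mulr0.
Qed.

Hypothesis J_E0 : Jmx n = n%:R *: E ord0.

Lemma spectral_sym_pgd (N : 'M[algC]_n) theta k alpha beta :
  N = spectral theta -> N^T = N -> zero_one_mx N ->
  pgd_eigenvalues n k alpha beta theta ->
  sym_partial_geometric_design N n k alpha beta.
Proof.
move=> N_theta NT N01 [theta0 theta_cubic].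
have J_delta : Jmx n = spectral (fun i => n%:R * (i == ord0)%:R).
  by rewrite -spectralZ spectral_delta.
have NJ : N *m Jmx n = k%:R *: Jmx n.
  rewrite N_theta J_delta mul_spectral spectralZ; apply: eq_spectral => i.
  by case: eqP => [->|_]; rewrite ?theta0 ?mulr1 ?mulr0 ?mul0r // mulrC.
have row_sum i : \sum_j N i j = k%:R.
  have := congr1 (fun M : 'M[algC]_n => M i i) NJ; rewrite !mxE mulr1 => <-.
  by apply: eq_bigr => j _; rewrite mxE mulr1.
split => // [j|].
  by rewrite -(row_sum j); apply: eq_bigr => i _; rewrite -{1}NT mxE.
rewrite NT N_theta J_delta !mul_spectral spectralB !spectralZ spectralD.
by apply: eq_spectral => i; rewrite (mulrC n%:R) -theta_cubic exprSr expr2.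
Qed.

End Spectral.

Lemma character_table_spectral n d (A : 'I_d.+1 -> 'M[algC]_n) P :
  character_table A P ->
  exists E : 'I_d.+1 -> 'M[algC]_n,
    [/\ forall i j, E i *m E j = if i == j then E i else 0,
        E ord0 != 0, Jmx n = n%:R *: E ord0
      & forall j, A j = spectral E (fun i => P i j)].
Proof.
move=> [E [[E0 Eorth Enz _ _] AP]]; exists E; split => //.
have n_neq0 : n%:R != 0 :> algC.
  by apply: contraNneq (Enz ord0) => n0; rewrite E0 n0 invr0 scale0r.
by rewrite E0 scalerA mulfV // scale1r.
Qed.

Lemma scheme_order n d (A : 'I_d.+1 -> 'M[algC]_n) P :
  sym_assoc_scheme A -> character_table A P -> n%:R = \sum_j P ord0 j.
Proof.
move=> [[_ _ _ _ sumA] _] /character_table_spectral [E [Eorth Enz J_E0 AE]].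
have : E ord0 *m Jmx n = E ord0 *m \sum_j A j by rewrite sumA.
under eq_bigr do rewrite AE.
rewrite spectral_sum mulE_spectral // J_E0 -scalemxAr Eorth eqxx => /eqP.
by rewrite -subr_eq0 -scalerBl scaler_eq0 (negbTE Enz) orbF subr_eq0 => /eqP.
Qed.

(* The entries of a scheme are 0/1 and every entry of J lies in exactly one A_i. *)
Lemma zero_one_mx_addA n d (A : 'I_d.+1 -> 'M[algC]_n) i j :
  sym_assoc_scheme A -> i != j -> zero_one_mx (A i + A j).
Proof.
move=> [[_ A01 _ _ sumA] _] ij a b.
pose c (h : 'I_d.+1) : nat := A h a b == 1.
have Ac h : A h a b = (c h)%:R.
  by rewrite /c; case: (A01 h a b) => ->; rewrite ?eqxx // eq_sym oner_eq0.
have : (\sum_h c h)%:R = 1 :> algC.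
  have := congr1 (fun M : 'M[algC]_n => M a b) sumA.
  by rewrite /Jmx mxE summxE natr_sum; under eq_bigr do rewrite -Ac.
move/eqP; rewrite -[1]/(1%:R) eqr_nat => /eqP.
have ji : j != i by rewrite eq_sym.
rewrite (bigD1 i) //= (bigD1 j) //= addnA => sum_c.
have : (c i + c j <= 1)%N by rewrite -sum_c leq_addr.
rewrite mxE !Ac -natrD; case: (c i + c j)%N => [|[|]] // _; by [left | right].
Qed.

Section CharacterTable.
Variable m : nat.
Let M : algC := m%:R.

Lemma P_m_row0_sum : \sum_j P_m m 0 j = 3 * M ^+ 2.
Proof. by rewrite !big_ord_recr big_ord0 /= !mxE /= /M; ring. Qed.

Ltac check_columns :=
  case=> [[|[|[|[|?]]]] ?] //=; rewrite /P_m ?mxE /= /M natrM natrX; field.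

Lemma P_m_col1_pgd : (0 < m)%N ->
  pgd_eigenvalues (3 * m ^ 2) (m * (m - 1))
    (M ^+ 2 * (M ^+ 2 - 3 * M + 2) / 3) (M ^+ 2 * (M ^+ 2 - 3 * M + 5) / 3)
    (fun i => P_m m i 1).
Proof. by move=> m_gt0; split; [rewrite mxE /= natrM natrB | check_columns]. Qed.

Lemma P_m_col2_pgd :
  pgd_eigenvalues (3 * m ^ 2) (m * (m + 1))
    (M ^+ 2 * (M ^+ 2 + 3 * M + 2) / 3) (M ^+ 2 * (M ^+ 2 + 3 * M + 5) / 3)
    (fun i => P_m m i 2).
Proof. by split; [rewrite mxE /= natrM natrD | check_columns]. Qed.

Lemma P_m_col30_pgd :
  pgd_eigenvalues (3 * m ^ 2) (m ^ 2)
    (M ^+ 2 * (M ^+ 2 - 1) / 3) (M ^+ 2 * (M ^+ 2 + 2) / 3)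
    (fun i => P_m m i 3 + P_m m i 0).
Proof. by split; [rewrite !mxE /= natrX /M; ring | check_columns]. Qed.

End CharacterTable.

Theorem theorem5p2 (m : nat) (n : nat) (A : 'I_4 -> 'M[algC]_n) :
  (0 < m)%N ->
  sym_assoc_scheme A ->
  character_table A (P_m m) ->
  let M : algC := m%:R in
  [/\ sym_partial_geometric_design (A 1) (3 * m ^ 2) (m * (m - 1))
        (M ^+ 2 * (M ^+ 2 - 3 * M + 2) / 3) (M ^+ 2 * (M ^+ 2 - 3 * M + 5) / 3),
      sym_partial_geometric_design (A 2) (3 * m ^ 2) (m * (m + 1))
        (M ^+ 2 * (M ^+ 2 + 3 * M + 2) / 3) (M ^+ 2 * (M ^+ 2 + 3 * M + 5) / 3)
    & sym_partial_geometric_design (A 3 + A 0) (3 * m ^ 2) (m ^ 2)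
        (M ^+ 2 * (M ^+ 2 - 1) / 3) (M ^+ 2 * (M ^+ 2 + 2) / 3)].
Proof.
move=> m_gt0 scheme table M.
have n_eq : n = (3 * m ^ 2)%N.
  apply/eqP; rewrite -(eqr_nat algC) (scheme_order scheme table) P_m_row0_sum.
  by rewrite natrM natrX.
subst n.
have [[_ A01 _ AT _] _] := scheme.
have [E [Eorth _ J_E0 AE]] := character_table_spectral table.
have A30_spec : A 3 + A 0 = spectral E (fun i => P_m m i 3 + P_m m i 0).
  by rewrite !AE spectralD.
have A30_sym : (A 3 + A 0)^T = A 3 + A 0 by rewrite linearD /= !AT.
have A30_01 : zero_one_mx (A 3 + A 0) by exact: zero_one_mx_addA.
split.
- exact (spectral_sym_pgd Eorth J_E0 (AE 1) (AT 1) (A01 1) (P_m_col1_pgd m_gt0)).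
- exact (spectral_sym_pgd Eorth J_E0 (AE 2) (AT 2) (A01 2) (P_m_col2_pgd m)).
- exact (spectral_sym_pgd Eorth J_E0 A30_spec A30_sym A30_01 (P_m_col30_pgd m)).
Qed.
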